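(* Let $G$ be a simple graph with edge ideal $I(G)\subseteq\Bbbk[x_1,\ldots,x_N]$, let $s\ge1$, and let $L\in\operatorname{Inter}\left(I(G)^s,I(G)^{(s)}\right)$. Then $\operatorname{reg}(L)\ge 2s-1+\operatorname{im}(G)$.
   Context: $I(G)=(x_ix_j\mid\{i,j\}\in E(G))$. For a squarefree monomial ideal $I=P_1\cap\cdots\cap P_r$ (minimal primary decomposition), $I^{(s)}=P_1^s\cap\cdots\cap P_r^s$. For monomial ideals $J\subseteq K$, $\operatorname{Inter}(J,K)$ is the set of monomial ideals of the form $J+(f_1,\ldots,f_m)$ where the $f_j$ are among the minimal monomial generators of $K$. $\operatorname{im}(G)$ is the induced matching number of $G$ (maximum size of a set of pairwise disjoint edges forming an induced subgraph). $\operatorname{reg}$ is Castelnuovo–Mumford regularity. *)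

From HB Require Import structures.
From mathcomp Require Import all_boot all_order all_algebra.
Set Implicit Arguments.
Unset Strict Implicit.
Unset Printing Implicit Defensive.
Import GRing.Theory.

Definition mono (N : nat) := {ffun 'I_N -> nat}.
Definition mone (N : nat) : mono N := [ffun => 0%N].
Definition mmul (N : nat) (a b : mono N) : mono N := [ffun i => (a i + b i)%N].
Definition mdvd (N : nat) (a b : mono N) : bool := [forall i, a i <= b i].
Definition mvar (N : nat) (j : 'I_N) : mono N := [ffun i => nat_of_bool (i == j)].
Definition mdeg (N : nat) (a : mono N) : nat := (\sum_i a i)%N.

(* A monomial ideal is represented by (the predicate "is in the ideal" on
   monomials of) a finite list of monomial generators. *)
Definition in_mideal (N : nat) (gens : seq (mono N)) (m : mono N) : bool :=
  has (fun g : mono N => mdvd g m) gens.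

Fixpoint gens_pow (N : nat) (gens : seq (mono N)) (s : nat) : seq (mono N) :=
  match s with
  | 0 => [:: mone N]
  | s'.+1 => [seq mmul g h | g <- gens, h <- gens_pow gens s']
  end.

(* A simple graph on vertex set 'I_N is a symmetric irreflexive relation. *)
Definition edge_gens (N : nat) (G : rel 'I_N) : seq (mono N) :=
  [seq mmul (mvar p.1) (mvar p.2) | p <- enum [pred p : 'I_N * 'I_N | G p.1 p.2]].

Definition prime_gens (N : nat) (C : {set 'I_N}) : seq (mono N) :=
  [seq mvar j | j <- enum C].
Definition prime_contains (N : nat) (gens : seq (mono N)) (C : {set 'I_N}) : bool :=
  all (fun g : mono N => [exists j in C, 0 < g j]) gens.
(* The minimal primes of a squarefree monomial ideal I are the minimal monomial
   primes P_C containing I, and I = \bigcap P_C is its minimal primary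
   decomposition; I^(s) = \bigcap P_C^s. *)
Definition in_symbolic_pow (N : nat) (gens : seq (mono N)) (s : nat) (m : mono N) : bool :=
  [forall C : {set 'I_N},
     minset (prime_contains gens) C ==> in_mideal (gens_pow (prime_gens C) s) m].

Definition min_mono_gen (N : nat) (P : pred (mono N)) (m : mono N) : Prop :=
  P m /\ forall d : mono N, mdvd d m -> d != m -> ~~ P d.

Definition induced_matching (N : nat) (G : rel 'I_N) (M : {set 'I_N * 'I_N}) : bool :=
  [forall p in M, G p.1 p.2] &&
  [forall p in M, forall q in M, (p != q) ==>
     [&& p.1 != q.1, p.1 != q.2, p.2 != q.1, p.2 != q.2,
         ~~ G p.1 q.1, ~~ G p.1 q.2, ~~ G p.2 q.1 & ~~ G p.2 q.2]].

Definition im (N : nat) (G : rel 'I_N) : nat :=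
  (\max_(M : {set 'I_N * 'I_N} | induced_matching G M) #|M|)%N.

(* beta_{i,b}(I) = dim_k Tor_i(k, I)_b = dim_k H_i(K(x_1..x_N) (x) I)_b.
   In multidegree b, (K_i (x) I)_b has basis e_A (x) x^(b - 1_A) for
   A subset of [N] with |A| = i, A in supp b and x^(b - 1_A) in I. *)
Definition bminus (N : nat) (b : mono N) (A : {set 'I_N}) : mono N :=
  [ffun j => (b j - nat_of_bool (j \in A))%N].

Definition kface (N : nat) (P : pred (mono N)) (b : mono N) (A : {set 'I_N}) : bool :=
  [forall j in A, 0 < b j] && P (bminus b A).

Definition nsets (N : nat) := #|{set 'I_N}|.

(* Koszul differential d_i : (K_i (x) I)_b -> (K_{i-1} (x) I)_b,
   e_A (x) m |-> sum_{j in A} (-1)^{#{k in A | k < j}} e_{A\j} (x) x_j m,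
   as a matrix acting on row vectors, with basis indexed by all subsets
   of 'I_N (rows/columns outside the complex are zero). *)
Definition kdiff (F : fieldType) (N : nat) (P : pred (mono N)) (b : mono N) (i : nat)
  : 'M[F]_(nsets N, nsets N) :=
  (\matrix_(r < nsets N, c < nsets N)
    (let A : {set 'I_N} := @enum_val _ (mem [set: {set 'I_N}]) (cast_ord (esym (cardsT _)) r) in
     let B : {set 'I_N} := @enum_val _ (mem [set: {set 'I_N}]) (cast_ord (esym (cardsT _)) c) in
     if kface P b A && (#|A| == i) then
       \sum_(j in A) (if B == A :\ j then (-1) ^+ #|[set k in A | (k < j)%N]| else 0)
     else 0))%R.

Definition betti (F : fieldType) (N : nat) (P : pred (mono N)) (i : nat) (b : mono N) : nat :=
  (#|[set A : {set 'I_N} | kface P b A & #|A| == i]|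
     - \rank (kdiff F P b i) - \rank (kdiff F P b i.+1))%N.

(* reg(I) = max { |b| - i : beta_{i,b}(I) <> 0 }; "reg(I) >= r" unfolds to: *)
Definition reg_ge (F : fieldType) (N : nat) (P : pred (mono N)) (r : nat) : Prop :=
  exists (i : nat) (b : mono N), betti F P i b <> 0%N /\ (r + i <= mdeg b)%N.

(* Fix an induced matching M of size im G and one of its edges {a, a'}, and let b be
   the multidegree equal to s on a and a' and to 1 on the other vertices of M.  In the
   Koszul complex of L in degree b, the boundary z of e_S, where S holds one endpoint
   of each edge of M, is a cycle of homological degree |M| - 1: each x^(b - 1_(S\j)) is
   divisible by a product of s edges of M.  It is not a boundary.  Let w be the
   cochain supported on the transversals T of the edges of M other than {a, a'}, with
   w(T) the sign of the permutation sorting T by edge.  If a face A of degree |M| has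
   A \ j transversal, then j is not a or a': otherwise x^(b - 1_A) has degree s - 1 at j
   and an independent support elsewhere, so some minimal vertex cover meets it in
   degree < s and it lies neither in I^s nor in I^(s).  Hence A contains j and its
   partner, both A \ j and A \ partner(j) are transversals, and their two terms in
   w(dA) cancel; so w kills boundaries, while w(z) = +-1.  Thus beta_(|M|-1, b)(L) is
   nonzero, and |b| - (|M| - 1) = 2s - 1 + |M|. *)

From mathcomp Require Import all_boot all_order all_algebra.
From mathcomp Require Import zify.
Set Implicit Arguments.
Unset Strict Implicit.
Unset Printing Implicit Defensive.
Import GRing.Theory.
Local Open Scope ring_scope.

Section CoordinateSubspace.
Variables (F : fieldType) (n : nat) (Fc : pred 'I_n).

Definition coord_proj : 'M[F]_(#|Fc|, n) := \matrix_(i, j) (enum_val i == j)%:R.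

Lemma mul_coord_proj_tr m (U : 'M[F]_(m, n)) r k :
  (U *m coord_proj^T) r k = U r (enum_val k).
Proof.
rewrite !mxE (bigD1 (enum_val k)) //= big1 => [|j /negbTE jk].
  by rewrite !mxE eqxx mulr1 addr0.
by rewrite !mxE eq_sym jk mulr0.
Qed.

Lemma coord_proj_mul_tr : coord_proj *m coord_proj^T = 1%:M.
Proof.
apply/matrixP => i j; rewrite mul_coord_proj_tr !mxE.
by rewrite (inj_eq enum_val_inj) eq_sym.
Qed.

Lemma mxrank_coord_proj : \rank coord_proj = #|Fc|.
Proof.
apply/eqP; rewrite eqn_leq rank_leq_row /=.
by rewrite -{1}(mxrank1 F #|Fc|) -coord_proj_mul_tr mxrankM_maxl.
Qed.

Lemma submx_coord_proj m (U : 'M[F]_(m, n)) :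
  (forall r c, ~~ Fc c -> U r c = 0) -> (U <= coord_proj)%MS.
Proof.
move=> U0; apply/submxP; exists (U *m coord_proj^T).
apply/matrixP => r c; rewrite mxE.
under eq_bigr do rewrite mul_coord_proj_tr mxE.
have [Fcc|nFc] := boolP (Fc c); last first.
  rewrite U0 // big1 // => k _; have [kc|] := eqVneq (enum_val k) c; last by rewrite mulr0.
  by move: nFc; rewrite -kc; have := enum_valP k; rewrite unfold_in => ->.
rewrite (bigD1 (enum_rank_in Fcc c)) //= enum_rankK_in // eqxx mulr1 big1 ?addr0 // => k kc.
rewrite (_ : enum_val k == c = false) ?mulr0 //.
by apply: contraNF kc => /eqP ck; rewrite -(enum_valK_in Fcc k) ck.
Qed.

End CoordinateSubspace.

Lemma nonboundary_cycle_rank_lt (F : fieldType) n (Fc : pred 'I_n)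
    (D1 D2 : 'M[F]_n) (z : 'rV[F]_n) (w : 'cV[F]_n) :
  (forall r c, ~~ Fc r -> D1 r c = 0) -> (forall r c, ~~ Fc c -> D2 r c = 0) ->
  D2 *m D1 = 0 ->
  (forall c, ~~ Fc c -> z 0 c = 0) -> z *m D1 = 0 ->
  D2 *m w = 0 -> z *m w != 0 ->
  (\rank D1 + \rank D2 < #|Fc|)%N.
Proof.
move=> D1_0 D2_0 D21 z0 zD1 D2w zw.
(* The cycles supported on Fc span [P :&: kermx D1], of rank #|Fc| - \rank D1;
   it contains the boundaries (rows of D2) and also z, which w separates from them. *)
pose P := coord_proj F Fc.
have rkPD1 : \rank (P *m D1) = \rank D1.
  apply/eqP; rewrite eqn_leq mxrankM_maxr /=.
  have /submxP [X D1tE] : (D1^T <= P)%MS.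
    by apply: submx_coord_proj => r c nFc; rewrite mxE D1_0.
  have D1E : D1 = P^T *m X^T by rewrite -[D1]trmxK D1tE trmx_mul.
  by rewrite {2}D1E mulmxA coord_proj_mul_tr mul1mx {1}D1E mxrankM_maxr.
pose U := col_mx D2 z.
have sU : (U <= P :&: kermx D1)%MS.
  rewrite sub_capmx sub_kermx mul_col_mx D21 zD1 col_mx0 eqxx andbT.
  apply: submx_coord_proj => r c nFc; rewrite -(splitK r).
  by case: (split r) => k; rewrite ?col_mxEu ?col_mxEd ?D2_0 // ord1 z0.
have ltU : (D2 < U)%MS.
  rewrite ltmxE -addsmxE addsmxSl /=; apply: contra zw => /submxP [Y UY].
  have -> : z = dsubmx Y *m D2.
    by rewrite -(col_mxKd D2 z) -/U UY -{1}(vsubmxK Y) mul_col_mx col_mxKd.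
  by rewrite -mulmxA D2w mulmx0.
have := mxrank_mul_ker P D1; rewrite rkPD1 mxrank_coord_proj => <-.
by rewrite ltn_add2l (leq_trans (rank_ltmx ltU)) ?mxrankS.
Qed.

Lemma sumr_antisym (R : zmodType) n (h : 'I_n -> 'I_n -> R) :
  (forall j k, j != k -> h j k = - h k j) -> \sum_j \sum_(k | k != j) h j k = 0.
Proof.
move=> h_anti.
have split_neq j : \sum_(k | k != j) h j k =
    \sum_(k : 'I_n | (k < j)%N) h j k + \sum_(k : 'I_n | (j < k)%N) h j k.
  rewrite (bigID (fun k : 'I_n => (k < j)%N)) /=; congr (_ + _); apply: eq_bigl => k.
    by rewrite -val_eqE /= neq_ltn andbC; case: ltngtP.
  by rewrite -val_eqE /= neq_ltn; case: ltngtP.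
rewrite (eq_bigr _ (fun j _ => split_neq j)) big_split /=.
rewrite [X in _ + X](exchange_big_dep xpredT) //= -big_split big1 // => j _.
rewrite -big_split big1 //= => k kj.
by rewrite h_anti ?addNr //; apply: contraTneq kj => ->; rewrite ltnn.
Qed.

Section KoszulComplex.
Variables (F : fieldType) (N : nat) (P : pred (mono N)) (b : mono N).
Hypothesis P_up : forall m m', mdvd m m' -> P m -> P m'.
Implicit Types (A B C S : {set 'I_N}) (j k : 'I_N).

Definition kset (r : 'I_(nsets N)) : {set 'I_N} :=
  @enum_val _ (mem [set: {set 'I_N}]) (cast_ord (esym (cardsT _)) r).

Lemma kset_bij : bijective kset.
Proof.
apply: inj_card_bij; last by rewrite card_ord.
by move=> r1 r2 /enum_val_inj /cast_ord_inj.
Qed.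

Lemma sum_kset (G : {set 'I_N} -> F) : \sum_r G (kset r) = \sum_A G A.
Proof. by rewrite (reindex kset) //; case: kset_bij => g h1 h2; exists g. Qed.

Definition ksign A j : F := (-1) ^+ #|[set k in A | (k < j)%N]|.

Lemma ksign_prod A j : ksign A j = \prod_(k in A) (-1) ^+ (k < j)%N.
Proof.
rewrite prodrXr; congr (_ ^+ _); rewrite -sum1_card big_mkcond [RHS]big_mkcond /=.
by apply: eq_bigr => k _; rewrite inE; case: (k \in A); case: (k < j)%N.
Qed.

Lemma ksign_setD1 A j k : j \in A -> ksign (A :\ j) k = (-1) ^+ (j < k)%N * ksign A k.
Proof.
by move=> jA; rewrite !ksign_prod (big_setD1 j jA) /= mulrA -expr2 sqrr_sign mul1r.
Qed.

Definition kcell i A := kface P b A && (#|A| == i).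

Definition kbd S B : F :=
  \sum_(j in S) (if B == S :\ j then ksign S j else 0).

Definition kdiff_coef i A B := if kcell i A then kbd A B else 0.

Lemma kdiffE i r c : kdiff F P b i r c = kdiff_coef i (kset r) (kset c).
Proof. by rewrite mxE. Qed.

Lemma sum_kbd S (H : {set 'I_N} -> F) :
  \sum_A kbd S A * H A = \sum_(j in S) ksign S j * H (S :\ j).
Proof.
under eq_bigr do rewrite mulr_suml; rewrite exchange_big /=; apply: eq_bigr => j _.
by rewrite (bigD1 (S :\ j)) //= eqxx big1 ?addr0 // => A /negbTE ->; rewrite mul0r.
Qed.

Lemma kbd_kbd S C : \sum_(j in S) ksign S j * kbd (S :\ j) C = 0.
Proof.
pose h j k := if [&& j \in S, k \in S & C == S :\ j :\ k]
              then ksign S j * ksign (S :\ j) k else 0.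
rewrite -[RHS](@sumr_antisym _ _ h); last first.
  move=> j k jk; rewrite /h; have -> : S :\ k :\ j = S :\ j :\ k.
    by rewrite !setDDl setUC.
  case: (boolP (j \in S)) => jS; last by rewrite andbF oppr0.
  case: (boolP (k \in S)) => kS //=; case: (C == _); rewrite ?oppr0 //.
  have kj : (k < j)%N = ~~ (j < k)%N.
    by case: ltngtP => // /val_inj kj; rewrite kj eqxx in jk.
  rewrite !ksign_setD1 // kj signrN mulNr mulrN opprK.
  by rewrite mulrCA [RHS]mulrCA [ksign S j * _]mulrC.
rewrite big_mkcond; apply: eq_bigr => j _; rewrite /kbd /h.
case: (boolP (j \in S)) => jS; last by rewrite big1.
rewrite mulr_sumr big_mkcond [RHS]big_mkcond; apply: eq_bigr => k _.
by rewrite in_setD1; case: (k != j); case: (k \in S); case: (C == _); rewrite ?mulr0.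
Qed.

Lemma bminusE A v : bminus b A v = (b v - (v \in A))%N.
Proof. by rewrite ffunE. Qed.

Lemma bminus_dvd A B : A \subset B -> mdvd (bminus b B) (bminus b A).
Proof.
move=> AB; apply/forallP => k; rewrite !bminusE leq_sub2l //.
by case kA: (k \in A); rewrite ?(subsetP AB k kA).
Qed.

Lemma kcell_setD1 i A j : kcell i.+1 A -> j \in A -> kcell i (A :\ j).
Proof.
case/andP => /andP [/forallP A_supp PA] /eqP cardA jA; apply/andP; split.
  apply/andP; split; last by apply: P_up PA; apply: bminus_dvd; apply: subD1set.
  by apply/forallP => k; apply/implyP => /setD1P [_ kA]; have := A_supp k; rewrite kA.
by move: cardA; rewrite (cardsD1 j A) jA add1n => -[->].
Qed.

Lemma kbd_kdiff_coef i S C : (forall j, j \in S -> kcell i (S :\ j)) ->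
  \sum_A kbd S A * kdiff_coef i A C = 0.
Proof.
move=> S_cells; rewrite sum_kbd -[RHS](kbd_kbd S C); apply: eq_bigr => j jS.
by rewrite /kdiff_coef S_cells.
Qed.

Lemma kdiff_mulmx i : kdiff F P b i.+1 *m kdiff F P b i = 0.
Proof.
apply/matrixP => r c; rewrite mxE; under eq_bigr do rewrite !kdiffE.
rewrite (sum_kset (fun A => kdiff_coef i.+1 (kset r) A * kdiff_coef i A (kset c))).
rewrite mxE {1}/kdiff_coef; case: (boolP (kcell i.+1 _)) => [r_cell|_]; last first.
  by rewrite big1 // => A _; rewrite mul0r.
by apply: kbd_kdiff_coef => j; apply: kcell_setD1.
Qed.

Definition krow (g : {set 'I_N} -> F) : 'rV[F]_(nsets N) := \row_r g (kset r).
Definition kcol (g : {set 'I_N} -> F) : 'cV[F]_(nsets N) := \col_r g (kset r).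

Lemma card_kcell i :
  #|[pred r | kcell i (kset r)]| = #|[set A | kface P b A & #|A| == i]|.
Proof.
rewrite -(on_card_preimset (f := kset)); last by case: kset_bij => g h1 h2; exists g.
by apply: eq_card => r; rewrite !inE.
Qed.

Lemma betti_neq0 i S (w : {set 'I_N} -> F) :
  (forall j, j \in S -> kcell i (S :\ j)) ->
  (forall A, kcell i.+1 A -> \sum_(j in A) ksign A j * w (A :\ j) = 0) ->
  \sum_(j in S) ksign S j * w (S :\ j) != 0 ->
  betti F P i b <> 0%N.
Proof.
move=> S_cells w_cocycle wS; apply/eqP; rewrite /betti -lt0n -subnDA subn_gt0 -card_kcell.
apply: (@nonboundary_cycle_rank_lt _ _ _ _ _ (krow (kbd S)) (kcol w)).
- by move=> r c /= /negbTE r_cell; rewrite kdiffE /kdiff_coef r_cell.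
- move=> r c c_cell; rewrite kdiffE /kdiff_coef; case: ifP => // /kcell_setD1 r_cell.
  by rewrite /kbd big1 // => j jr; case: eqP => // cE; rewrite /= cE r_cell in c_cell.
- exact: kdiff_mulmx.
- move=> c c_cell; rewrite mxE /kbd big1 // => j jS; case: eqP => // cE.
  by rewrite /= cE S_cells in c_cell.
- apply/matrixP => r c; rewrite mxE; under eq_bigr do rewrite mxE kdiffE.
  by rewrite (sum_kset (fun A => kbd S A * kdiff_coef i A (kset c))) kbd_kdiff_coef ?mxE.
- apply/matrixP => r c; rewrite mxE; under eq_bigr do rewrite kdiffE mxE.
  rewrite (sum_kset (fun A => kdiff_coef i.+1 (kset r) A * w A)) mxE /kdiff_coef.
  case: (boolP (kcell _ _)) => [r_cell|_]; first by rewrite sum_kbd w_cocycle.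
  by rewrite big1 // => A _; rewrite mul0r.
- apply: contra wS => /eqP /matrixP /(_ 0 0); rewrite !mxE => zw.
  rewrite -sum_kbd -(sum_kset (fun A => kbd S A * w A)) -[X in _ == X]zw.
  by apply/eqP; apply: eq_bigr => r _; rewrite !mxE.
Qed.

End KoszulComplex.

Section MonomialIdeals.
Variable N : nat.
Implicit Types (a m e g : mono N) (gens : seq (mono N)) (C : {set 'I_N}).

Lemma mdvdP a m : reflect (forall i, a i <= m i)%N (mdvd a m).
Proof. exact: forallP. Qed.

Lemma mdvd_trans a m (m' : mono N) : mdvd a m -> mdvd m m' -> mdvd a m'.
Proof. by move=> /mdvdP am /mdvdP mm'; apply/mdvdP => i; apply: leq_trans (am i) (mm' i). Qed.

Lemma in_mideal_dvd gens m (m' : mono N) :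
  mdvd m m' -> in_mideal gens m -> in_mideal gens m'.
Proof. by move=> mm' /hasP [g gin gm]; apply/hasP; exists g; last apply: mdvd_trans mm'. Qed.

Lemma gens_pow_mul gens k e g :
  e \in gens -> g \in gens_pow gens k -> mmul e g \in gens_pow gens k.+1.
Proof. by move=> eg gk; apply/allpairsP; exists (e, g). Qed.

Definition mpow e k := iter k (mmul e) (mone N).

Lemma mpowE e k v : mpow e k v = (k * e v)%N.
Proof. by elim: k => [|k IHk]; rewrite /= ffunE // IHk mulSn. Qed.

Lemma mpow_gens_pow gens e k : e \in gens -> mpow e k \in gens_pow gens k.
Proof. by move=> eg; elim: k => [|k IHk]; [rewrite inE | apply: gens_pow_mul]. Qed.

Definition csum C m : nat := (\sum_(j in C) m j)%N.

Lemma leq_csum C m (m' : mono N) : mdvd m m' -> (csum C m <= csum C m')%N.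
Proof. by move=> /mdvdP mm'; apply: leq_sum => j _. Qed.

Lemma csum_mmul C m (m' : mono N) : csum C (mmul m m') = (csum C m + csum C m')%N.
Proof. by rewrite /csum -big_split; apply: eq_bigr => j _; rewrite ffunE. Qed.

Lemma csum_mideal_pow gens C k m :
  (forall e, e \in gens -> 0 < csum C e)%N ->
  in_mideal (gens_pow gens k) m -> (k <= csum C m)%N.
Proof.
move=> gensC /hasP [g gk /(leq_csum C)]; apply: leq_trans.
elim: k g gk => [|k IHk] g //= /allpairsP [[e h] /= [eg hk ->]].
by rewrite csum_mmul -add1n leq_add ?gensC ?IHk.
Qed.

Lemma csum_prime_gens C e : e \in prime_gens C -> (0 < csum C e)%N.
Proof.
by case/mapP => j; rewrite mem_enum => jC ->; rewrite /csum (bigD1 j) //= ffunE eqxx.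
Qed.

Lemma csum_cover gens C :
  prime_contains gens C -> forall e, e \in gens -> (0 < csum C e)%N.
Proof.
move=> /allP gensC e /gensC /existsP [j /andP [jC ej]].
by rewrite /csum (bigD1 j) //= ltn_addr.
Qed.

Lemma csum_symbolic_pow gens s fs C m :
  (forall f, f \in fs -> in_symbolic_pow gens s f) ->
  minset (prime_contains gens) C ->
  in_mideal (gens_pow gens s ++ fs) m -> (s <= csum C m)%N.
Proof.
move=> fs_sym minC /hasP [g]; rewrite mem_cat => /orP [gs | gfs] gm.
  by apply: csum_mideal_pow (csum_cover (minsetp minC)) _; apply/hasP; exists g.
have /forallP /(_ C) := fs_sym g gfs; rewrite minC.
by move=> /(csum_mideal_pow (@csum_prime_gens C)) /leq_trans; apply; apply: leq_csum.
Qed.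

End MonomialIdeals.

Section PairSign.
Variables (F : fieldType) (N : nat) (r : 'I_N -> nat).
Implicit Types (B T : {set 'I_N}) (j x : 'I_N).

Definition winv T : F :=
  \prod_(x in T) \prod_(y in T) (-1) ^+ ((x < y)%N && (r y < r x)%N).

Lemma winv_neq0 T : winv T != 0.
Proof. by apply/prodf_neq0 => x _; apply/prodf_neq0 => y _; rewrite signr_eq0. Qed.

Lemma winv_setU1 B j : j \notin B -> {in B, forall x, r x != r j} ->
  winv (j |: B) = \prod_(x in B) (-1) ^+ ((x < j)%N (+) (r x < r j)%N) * winv B.
Proof.
move=> jB rB; rewrite /winv big_setU1 //= big_setU1 //= ltnn mul1r.
under [X in _ * X = _]eq_bigr => x xB do rewrite big_setU1 //=.
rewrite big_split /= mulrA; congr (_ * _); rewrite -big_split /=.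
apply: eq_bigr => x xB; rewrite -signr_addb; congr (_ ^+ _).
have xj : x != j by apply: contraNneq jB => <-.
case: (ltngtP x j) xj => [||/val_inj ->]; rewrite ?eqxx //= => _;
  by case: (ltngtP (r x) (r j)) (rB x xB).
Qed.

Lemma sign_pair B j0 j1 : j0 != j1 -> j0 \notin B -> j1 \notin B -> r j0 = r j1 ->
  {in B, forall x, r x != r j0} ->
  ksign F (j0 |: (j1 |: B)) j0 * winv (j1 |: B) +
  ksign F (j0 |: (j1 |: B)) j1 * winv (j0 |: B) = 0.
Proof.
move=> j01 j0B j1B r01 rB.
have j0B' : j0 \notin j1 |: B by rewrite !inE negb_or j01.
rewrite winv_setU1 -?r01 // winv_setU1 // !ksign_prod.
rewrite !big_setU1 //= !ltnn /= !mul1r.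
set Q0 := \prod_(x in B) _ ^+ (x < j0)%N; set Q1 := \prod_(x in B) _ ^+ (x < j1)%N.
set X1 := \prod_(x in B) _ ^+ ((x < j1)%N (+) _); set X0 := \prod_(x in B) _ ^+ (_ (+) _).
have QX : Q0 * X1 = Q1 * X0.
  rewrite /Q0 /Q1 /X0 /X1 -!big_split; apply: eq_bigr => x _ /=; rewrite -!signr_addb.
  by case: (x < j0)%N; case: (x < j1)%N; case: (r x < r j0)%N.
have -> : (j1 < j0)%N = ~~ (j0 < j1)%N by case: ltngtP j01 => // /val_inj ->; rewrite eqxx.
by rewrite signrN !mulrA -(mulrA _ Q0) QX mulNr mulrA mulNr addNr.
Qed.

End PairSign.

Section EdgeIdeal.
Variables (N : nat) (G : rel 'I_N).

Lemma cover_setC_indep (U : {set 'I_N}) :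
  {in U &, forall u v, ~~ G u v} -> prime_contains (edge_gens G) (~: U).
Proof.
move=> U_indep; apply/allP => g /mapP [[x y]]; rewrite mem_enum inE /= => Gxy ->.
apply/existsP; case: (boolP (x \in U)) => xU; last by exists x; rewrite !ffunE eqxx inE xU.
exists y; rewrite !ffunE eqxx addn1 andbT inE.
by apply: contraL Gxy => /(U_indep x y xU).
Qed.

Lemma notin_mideal_indep s fs (c : mono N) j0 :
  (forall f, f \in fs -> in_symbolic_pow (edge_gens G) s f) ->
  (c j0 < s)%N -> {in [set v | 0 < c v]%N :\ j0 &, forall u v, ~~ G u v} ->
  ~~ in_mideal (gens_pow (edge_gens G) s ++ fs) c.
Proof.
move=> fs_sym cj0 /cover_setC_indep /minset_exists [C minC CU].
apply: contraTN cj0 => /(csum_symbolic_pow fs_sym minC) /leq_trans; rewrite -leqNgt; apply.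
have c0 j : j \in C -> j != j0 -> c j = 0%N.
  by move=> jC jj0; have := subsetP CU j jC; rewrite !inE jj0 lt0n negbK => /eqP.
rewrite /csum; case: (boolP (j0 \in C)) => j0C.
  by rewrite (bigD1 j0) //= big1 ?addn0 // => j /andP [jC]; apply: c0.
by rewrite big1 // => j jC; apply: c0 => //; apply: contraNneq j0C => <-.
Qed.

End EdgeIdeal.

Section InducedMatching.
Variables (N : nat) (G : rel 'I_N).
Hypothesis Girr : irreflexive G.
Variable M : {set 'I_N * 'I_N}.
Hypothesis M_ind : induced_matching G M.
Implicit Types (p q : 'I_N * 'I_N) (u v : 'I_N) (A T : {set 'I_N}).

Lemma matching_edge p : p \in M -> G p.1 p.2.
Proof. by case/andP: M_ind => /forall_inP M_edge _; apply: M_edge. Qed.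

Lemma matching_sep p q : p \in M -> q \in M -> p != q ->
  [&& p.1 != q.1, p.1 != q.2, p.2 != q.1, p.2 != q.2,
      ~~ G p.1 q.1, ~~ G p.1 q.2, ~~ G p.2 q.1 & ~~ G p.2 q.2].
Proof.
case/andP: M_ind => _ /forall_inP M_sep pM qM.
by move/(_ p pM)/forall_inP/(_ q qM)/implyP: M_sep.
Qed.

Lemma matching_neq p : p \in M -> p.1 != p.2.
Proof. by move/matching_edge; apply: contraTneq => ->; rewrite Girr. Qed.

Lemma matching_fst_inj p q : p \in M -> q \in M -> p.1 = q.1 -> p = q.
Proof.
move=> pM qM pq1; apply/eqP; apply: contraT => pq.
by have := matching_sep pM qM pq; rewrite pq1 eqxx.
Qed.

Lemma matching_snd_inj p q : p \in M -> q \in M -> p.2 = q.2 -> p = q.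
Proof.
move=> pM qM pq2; apply/eqP; apply: contraT => pq.
by have := matching_sep pM qM pq; rewrite pq2 eqxx !andbF.
Qed.

Lemma matching_fst_snd p q : p \in M -> q \in M -> p.1 != q.2.
Proof.
move=> pM qM; have [<-|pq] := eqVneq p q; first exact: matching_neq.
by case/and3P: (matching_sep pM qM pq).
Qed.

Definition partner v : 'I_N :=
  if [pick p in M | p.1 == v] is Some p then p.2
  else if [pick p in M | p.2 == v] is Some p then p.1 else v.

Lemma partner_fst p : p \in M -> partner p.1 = p.2.
Proof.
move=> pM; rewrite /partner; case: pickP => [q /andP [qM /eqP qp]|].
  by rewrite (matching_fst_inj qM pM qp).
by move/(_ p); rewrite pM eqxx.
Qed.

Lemma partner_snd p : p \in M -> partner p.2 = p.1.
Proof.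
move=> pM; rewrite /partner; case: pickP => [q /andP [qM /eqP qp]|_].
  by have := matching_fst_snd qM pM; rewrite qp eqxx.
case: pickP => [q /andP [qM /eqP qp]|]; first by rewrite (matching_snd_inj qM pM qp).
by move/(_ p); rewrite pM eqxx.
Qed.

Definition mfst := [set p.1 | p in M].
Definition msnd := [set p.2 | p in M].
Definition mverts := mfst :|: msnd.

Lemma mvertsP v : reflect (exists2 p, p \in M & v = p.1 \/ v = p.2) (v \in mverts).
Proof.
apply: (iffP setUP) => [[] /imsetP [p pM ->]|[p pM [] ->]].
- by exists p => //; left.
- by exists p => //; right.
- by left; apply/imsetP; exists p.
- by right; apply/imsetP; exists p.
Qed.

Lemma fst_mverts p : p \in M -> p.1 \in mverts.
Proof. by move=> pM; apply/mvertsP; exists p => //; left. Qed.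

Lemma snd_mverts p : p \in M -> p.2 \in mverts.
Proof. by move=> pM; apply/mvertsP; exists p => //; right. Qed.

Lemma partnerK : {in mverts, involutive partner}.
Proof.
by move=> v /mvertsP [p pM [] ->]; rewrite ?(partner_fst pM, partner_snd pM).
Qed.

Lemma partner_mverts v : v \in mverts -> partner v \in mverts.
Proof.
move=> /mvertsP [p pM [] ->]; rewrite ?(partner_fst pM, partner_snd pM) //.
  exact: snd_mverts.
exact: fst_mverts.
Qed.

Lemma partner_neq v : v \in mverts -> partner v != v.
Proof.
move=> /mvertsP [p pM [] ->]; rewrite ?(partner_fst pM, partner_snd pM).
  by rewrite eq_sym; apply: matching_neq.
exact: matching_neq.
Qed.

Lemma mverts_edge u v : u \in mverts -> v \in mverts -> G u v -> v = partner u.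
Proof.
move=> /mvertsP [p pM pu] /mvertsP [q qM qv] Guv.
have [pq|pq] := eqVneq p q.
  by subst q; case: pu qv Guv => -> [] ->; rewrite ?(partner_fst pM, partner_snd pM) ?Girr.
by move: (matching_sep pM qM pq); case: pu qv Guv => -> [] -> ->; rewrite !andbF.
Qed.

Lemma fst_mfst p : p \in M -> p.1 \in mfst.
Proof. exact: imset_f. Qed.

Lemma snd_notin_mfst p : p \in M -> p.2 \notin mfst.
Proof.
by move=> pM; apply/imsetP => -[q qM]; apply/eqP; rewrite eq_sym matching_fst_snd.
Qed.

Lemma mfst_partner v : v \in mverts -> (v \in mfst) = (partner v \notin mfst).
Proof.
move=> /mvertsP [p pM [] ->]; rewrite ?(partner_fst pM, partner_snd pM).
  by rewrite fst_mfst ?snd_notin_mfst.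
by rewrite fst_mfst // (negbTE (snd_notin_mfst pM)).
Qed.

Lemma card_mverts : #|mverts| = (#|M| + #|M|)%N.
Proof.
have disj : [disjoint mfst & msnd].
  apply/pred0P => v /=; apply/negP => /andP [/imsetP [p pM ->] /imsetP [q qM]].
  by apply/eqP; apply: matching_fst_snd.
rewrite cardsU (disjoint_setI0 disj) cards0 subn0 !card_in_imset //.
  by move=> p q pM qM; apply: matching_snd_inj.
by move=> p q pM qM; apply: matching_fst_inj.
Qed.

Definition pair_label v : nat := minn v (partner v).

Lemma pair_label_partner v : v \in mverts -> pair_label (partner v) = pair_label v.
Proof. by move=> vW; rewrite /pair_label partnerK // minnC. Qed.

Lemma pair_label_inj u v : u \in mverts -> v \in mverts ->
  pair_label u = pair_label v -> v = u \/ v = partner u.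
Proof.
rewrite /pair_label /minn => uW vW; do 2 case: ifP => _; move/val_inj.
- by left.
- by move=> ->; right; rewrite partnerK.
- by right.
- by move/(congr1 partner); rewrite !partnerK //; left.
Qed.

Section Witness.
Variables (F : fieldType) (s : nat) (fs : seq (mono N)).
Hypothesis s_gt0 : (0 < s)%N.
Hypothesis fs_sym : forall f, f \in fs -> in_symbolic_pow (edge_gens G) s f.
Variable e0 : 'I_N * 'I_N.
Hypothesis e0M : e0 \in M.

Local Notation a := e0.1.
Local Notation a' := e0.2.
Local Notation L := (in_mideal (gens_pow (edge_gens G) s ++ fs)).

Definition rest := mverts :\ a :\ a'.

Lemma in_rest v : (v \in rest) = [&& v != a', v != a & v \in mverts].
Proof. by rewrite !in_setD1. Qed.

Lemma rest_mverts v : v \in rest -> v \in mverts.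
Proof. by rewrite in_rest => /and3P []. Qed.

Lemma partner_rest v : v \in rest -> partner v \in rest.
Proof.
rewrite !in_rest => /and3P [va' va vW]; rewrite partner_mverts // andbT.
apply/andP; split.
  by apply: contra_neq va => pva'; rewrite -(partnerK vW) pva' partner_snd.
by apply: contra_neq va' => pva; rewrite -(partnerK vW) pva partner_fst.
Qed.

Lemma card_rest : #|rest| = (#|M| + #|M| - 2)%N.
Proof.
have a'_neq_a : a' != a by rewrite eq_sym matching_neq.
rewrite -card_mverts (cardsD1 a mverts) fst_mverts // (cardsD1 a' (mverts :\ a)).
by rewrite in_setD1 a'_neq_a snd_mverts // /rest; lia.
Qed.

Definition wdeg : mono N :=
  [ffun v => if v \in mverts then if (v == a) || (v == a') then s else 1%N else 0%N].

Lemma wdeg_gt0 v : (0 < wdeg v)%N = (v \in mverts).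
Proof. by rewrite ffunE; case: (v \in mverts) => //; case: ifP. Qed.

Lemma wdeg_rest v : v \in rest -> wdeg v = 1%N.
Proof. by rewrite in_rest ffunE => /and3P [/negbTE -> /negbTE -> ->]. Qed.

Lemma mdeg_wdeg : mdeg wdeg = (s + s + #|rest|)%N.
Proof.
rewrite /mdeg (bigID (mem mverts)) /= [X in (_ + X)%N]big1 => [|v /negbTE vW]; last first.
  by rewrite ffunE vW.
have a'_neq_a : a' != a by rewrite eq_sym matching_neq.
rewrite addn0 (big_setD1 a) ?fst_mverts // (big_setD1 a') ?in_setD1 ?a'_neq_a ?snd_mverts //=.
rewrite !ffunE fst_mverts ?snd_mverts // !eqxx orbT addnA (eq_bigr (fun=> 1%N)) ?sum1_card //.
exact: wdeg_rest.
Qed.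

Definition medge p : mono N := mmul (mvar p.1) (mvar p.2).

Lemma medge_edge_gens p : p \in M -> medge p \in edge_gens G.
Proof.
by move=> pM; apply: (map_f (fun p => medge p)); rewrite mem_enum inE matching_edge.
Qed.

Lemma card_mfst : #|mfst| = #|M|.
Proof. by rewrite card_in_imset // => p q pM qM; apply: matching_fst_inj. Qed.

Lemma wdeg_mfst_setD1_in_L q : q \in M -> L (bminus wdeg (mfst :\ q.1)).
Proof.
move=> qM; pose g := mmul (medge q) (mpow (medge e0) s.-1); apply/hasP; exists g.
  by rewrite mem_cat -{1}(prednK s_gt0) gens_pow_mul ?mpow_gens_pow ?medge_edge_gens.
apply/mdvdP => v; rewrite !ffunE mpowE !ffunE in_setD1.
have /negbTE aa' := matching_neq e0M; have a'S := snd_notin_mfst e0M.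
have [->|qe0] := eqVneq q e0.
  case: (eqVneq v a) => [->|va]; first by rewrite fst_mverts ?eqxx //= aa'; lia.
  case: (eqVneq v a') => [->|va']; last by rewrite muln0.
  by rewrite snd_mverts ?eqxx ?orbT //= (negbTE a'S); lia.
have /negbTE q1a : q.1 != a by apply: contraNneq qe0 => /(matching_fst_inj qM e0M)/eqP.
have /negbTE q2a' : q.2 != a' by apply: contraNneq qe0 => /(matching_snd_inj qM e0M)/eqP.
have /negbTE q1a' := matching_fst_snd qM e0M; have /negbTE aq2 := matching_fst_snd e0M qM.
have /negbTE q12 := matching_neq qM.
case: (eqVneq v a) => [->|va].
  by rewrite aq2 eq_sym q1a aa' fst_mverts //= fst_mfst; lia.
case: (eqVneq v a') => [->|va'].
  by rewrite (eq_sym a') q1a' eq_sym q2a' snd_mverts //= (negbTE a'S); lia.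
case: (eqVneq v q.1) => [->|vq1]; first by rewrite q12 fst_mverts // muln0.
case: (eqVneq v q.2) => [->|vq2]; last by rewrite muln0.
by rewrite (negbTE (snd_notin_mfst qM)) andbF snd_mverts // muln0.
Qed.

Lemma kcell_mfst_setD1 j : j \in mfst -> kcell L wdeg #|M|.-1 (mfst :\ j).
Proof.
move=> jS; rewrite /kcell /kface -card_mfst (cardsD1 j mfst) jS eqxx andbT.
case/imsetP: jS => q qM ->; rewrite wdeg_mfst_setD1_in_L // andbT.
by apply/forall_inP => k /setD1P [_ /imsetP [p pM ->]]; rewrite wdeg_gt0 fst_mverts.
Qed.

Definition transversal T :=
  (T \subset rest) && [forall v in rest, (v \in T) != (partner v \in T)].

Definition wcochain T : F :=
  if transversal T then winv F pair_label T else 0.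

Lemma transversal_partner T v :
  transversal T -> v \in rest -> (v \in T) = (partner v \notin T).
Proof.
by case/andP => _ /forall_inP /(_ v) Tv /Tv; case: (v \in T); case: (partner v \in T).
Qed.

Lemma transversal_mfst : transversal (mfst :\ a).
Proof.
apply/andP; split.
  apply/subsetP => x /setD1P [xa /imsetP [p pM xE]]; subst x.
  by rewrite in_rest fst_mverts // andbT matching_fst_snd.
apply/forall_inP => v vR; have vW := rest_mverts vR; have pvR := partner_rest vR.
move: vR pvR; rewrite !in_rest => /and3P [_ va _] /and3P [_ pva _].
by rewrite !in_setD1 va pva /= (mfst_partner vW); case: (partner v \in mfst).
Qed.

Lemma wcochain_mfst : \sum_(j in mfst) ksign F mfst j * wcochain (mfst :\ j) != 0.
Proof.
rewrite (bigD1 a) ?fst_mfst //= big1 ?addr0 => [|j /andP [_ ja]]; last first.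
  rewrite /wcochain /transversal; case: (boolP (_ \subset _)) => [/subsetP sub|]; last first.
    by rewrite mulr0.
  by have := sub a; rewrite in_setD1 eq_sym ja fst_mfst // in_rest eqxx andbF => /(_ isT).
by rewrite /wcochain transversal_mfst mulf_neq0 ?winv_neq0 ?signr_eq0.
Qed.

Lemma mverts_notin_rest v : v \in mverts -> v \notin rest -> (v == a) || (v == a').
Proof. by rewrite in_rest => -> /=; rewrite andbT negb_and !negbK orbC. Qed.

Lemma cell_transversal_rest A j0 :
  kcell L wdeg #|M| A -> j0 \in A -> transversal (A :\ j0) -> j0 \in rest.
Proof.
case/andP => /andP [/forall_inP A_supp LA] _ j0A tr0; apply: contraT => j0R.
have j0W : j0 \in mverts by rewrite -wdeg_gt0 A_supp.
have j0_end := mverts_notin_rest j0W j0R.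
suff: ~~ L (bminus wdeg A) by rewrite LA.
apply: (notin_mideal_indep fs_sym (j0 := j0)).
  by rewrite bminusE j0A ffunE j0W j0_end; lia.
move=> u v; rewrite !in_setD1 !inE !bminusE => /andP [uj0 cu] /andP [vj0 cv].
apply/negP => Guv.
have uW : u \in mverts by rewrite -wdeg_gt0 (leq_trans cu (leq_subr _ _)).
have vW : v \in mverts by rewrite -wdeg_gt0 (leq_trans cv (leq_subr _ _)).
have vE := mverts_edge uW vW Guv; subst v.
case: (boolP (u \in rest)) => uR.
  move: cu cv; rewrite !wdeg_rest ?partner_rest //.
  case: (boolP (u \in A)) => // uA; case: (boolP (partner u \in A)) => // puA _ _.
  by move: (transversal_partner tr0 uR); rewrite !in_setD1 (negbTE uA) (negbTE puA) !andbF.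
move: (mverts_notin_rest uW uR) j0_end vj0 uj0.
by do 2 case/orP => /eqP ->; rewrite ?(partner_fst e0M, partner_snd e0M) ?eqxx.
Qed.

Lemma transversal_swap A j0 : j0 \in A -> j0 \in rest -> transversal (A :\ j0) ->
  partner j0 \in A :\ j0 /\ transversal (A :\ partner j0).
Proof.
move=> j0A j0R tr0; have j0W := rest_mverts j0R.
have j1A0 : partner j0 \in A :\ j0.
  by apply: negbNE; rewrite -(transversal_partner tr0 j0R) setD11.
split => //; apply/andP; split.
  apply/subsetP => x /setD1P [_ xA]; have [-> //|xj0] := eqVneq x j0.
  by case/andP: tr0 => /subsetP sub _; apply: sub; rewrite in_setD1 xj0.
apply/forall_inP => v vR; have vW := rest_mverts vR.
have [->|vj0] := eqVneq v j0.
  by rewrite !in_setD1 eqxx j0A (eq_sym j0) (partner_neq j0W).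
have [->|vj1] := eqVneq v (partner j0).
  by rewrite partnerK // !in_setD1 eqxx j0A (eq_sym j0) (partner_neq j0W).
have pvj0 : partner v != j0 by apply: contraNneq vj1 => <-; rewrite partnerK.
have pvj1 : partner v != partner j0.
  by apply: contraNneq vj0 => /(congr1 partner); rewrite !partnerK // => ->.
by case/andP: tr0 => _ /forall_inP /(_ v vR); rewrite !in_setD1 vj0 vj1 pvj0 pvj1.
Qed.

Lemma sign_transversal_pair A j0 :
  j0 \in A -> j0 \in rest -> partner j0 \in A :\ j0 -> transversal (A :\ j0) ->
  ksign F A j0 * winv F pair_label (A :\ j0) +
  ksign F A (partner j0) * winv F pair_label (A :\ partner j0) = 0.
Proof.
move=> j0A j0R j1A0 tr0; have j0W := rest_mverts j0R.
have j10 := partner_neq j0W; have r01 := esym (pair_label_partner j0W).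
have j0_only x : x \in rest -> pair_label x = pair_label j0 -> x = j0 \/ x = partner j0.
  by move=> xR /esym /(pair_label_inj j0W (rest_mverts xR)).
move: (partner j0) j1A0 j10 r01 j0_only => j1 j1A0 j10 r01 j0_only.
have E0 : j1 |: (A :\ j0 :\ j1) = A :\ j0 by rewrite setD1K.
have E1 : j0 |: (A :\ j0 :\ j1) = A :\ j1.
  have -> : A :\ j0 :\ j1 = A :\ j1 :\ j0 by rewrite !setDDl setUC.
  by rewrite setD1K // in_setD1 eq_sym j10.
have := @sign_pair F N pair_label (A :\ j0 :\ j1) j0 j1.
rewrite E0 E1 setD1K //; apply => //.
- by rewrite eq_sym.
- by rewrite !in_setD1 eqxx andbF.
- by rewrite !in_setD1 eqxx.
move=> x; rewrite !in_setD1 => /and3P [xj1 xj0 xA]; apply/eqP => e.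
have xR : x \in rest.
  by case/andP: tr0 => /subsetP sub _; apply: sub; rewrite in_setD1 xj0 xA.
by case: (j0_only x xR e) => xE; rewrite xE eqxx in xj0 xj1.
Qed.

Lemma wcochain_cocycle A :
  kcell L wdeg #|M| A -> \sum_(j in A) ksign F A j * wcochain (A :\ j) = 0.
Proof.
move=> cellA; case: (pickP [pred j | (j \in A) && transversal (A :\ j)]); last first.
  move=> none; apply: big1 => j jA; move: (none j); rewrite /= jA /= /wcochain => ->.
  by rewrite mulr0.
move=> j0 /andP [j0A tr0]; have j0R := cell_transversal_rest cellA j0A tr0.
have [j1A0 tr1] := transversal_swap j0A j0R tr0.
rewrite (bigD1 j0) //= (bigD1 (partner j0)) /=; last by case/setD1P: j1A0 => -> ->.
rewrite big1 ?addr0 => [|j /andP [/andP [jA jj0] jj1]]; last first.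
  rewrite /wcochain; case: ifP => [trj|]; last by rewrite mulr0.
  move: (transversal_partner trj j0R); rewrite !in_setD1 (eq_sym j0) jj0 j0A.
  by rewrite (eq_sym (partner j0)) jj1; case/setD1P: j1A0 => _ ->.
by rewrite /wcochain tr0 tr1 sign_transversal_pair.
Qed.

Lemma reg_ge_matching : reg_ge F L (2 * s - 1 + #|M|)%N.
Proof.
have M_gt0 : (0 < #|M|)%N by apply/card_gt0P; exists e0.
exists #|M|.-1, wdeg; split; last by rewrite mdeg_wdeg card_rest; lia.
apply: (betti_neq0 (@in_mideal_dvd _ _) kcell_mfst_setD1 _ wcochain_mfst).
by rewrite prednK //; apply: wcochain_cocycle.
Qed.

End Witness.

End InducedMatching.

Lemma im_attained N (G : rel 'I_N) : exists2 M, induced_matching G M & im G = #|M|.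
Proof.
have ind0 : induced_matching G set0.
  by apply/andP; split; apply/forall_inP => p; rewrite in_set0.
have [|M M_ind imE] := @eq_bigmax_cond _ (induced_matching G) (fun M => #|M|).
  by apply/card_gt0P; exists set0.
by exists M.
Qed.

Lemma im_gt0 N (G : rel 'I_N) : (exists i j, G i j) -> (0 < im G)%N.
Proof.
case=> i [j Gij]; have ind1 : induced_matching G [set (i, j)].
  apply/andP; split; apply/forall_inP => p /set1P -> //=.
  by apply/forall_inP => q /set1P ->; rewrite eqxx.
by apply: leq_trans (leq_bigmax_cond _ ind1); rewrite cards1.
Qed.

Theorem lemma4p3 (F : fieldType) (N : nat) (G : rel 'I_N)
  (Gsym : symmetric G) (Girr : irreflexive G) (Gedge : exists i j, G i j)
  (s : nat) (hs : (1 <= s)%N) (fs : seq (mono N))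
  (hfs : forall f, f \in fs ->
           min_mono_gen (in_symbolic_pow (edge_gens G) s) f) :
  reg_ge F (in_mideal (gens_pow (edge_gens G) s ++ fs)) (2 * s - 1 + im G)%N.
Proof.
have [M M_ind imE] := im_attained G.
have [e0 e0M] : exists e0, e0 \in M by apply/card_gt0P; rewrite -imE im_gt0.
by rewrite imE; apply: (reg_ge_matching Girr M_ind F hs _ e0M) => f /hfs [].
Qed.
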